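(* Fix $p\le 5$ and a relative order $R$ of length $p$. Let $n_1,\dots,n_h$ and $n'_1,\dots,n'_h$ be nonnegative integers with $n'_a\le n_a$ for all $a$, $\sum_a(n_a-n'_a)\le 5$, and $n'=\sum_a n'_a\ge p$ (the $n'_a$ may be $0$); let $n=\sum_a n_a$. Let $P_1$ be the probability that $(\pi(1),\dots,\pi(p))$ has relative order $R$ when $\pi$ is a uniformly distributed permutation of $\{1^{n_1},\dots,h^{n_h}\}$, and $P_2$ the same probability when $\pi$ is a uniformly distributed permutation of $\{1^{n'_1},\dots,h^{n'_h}\}$. Then $|P_1-P_2|\le C/n$ for an absolute constant $C$ (independent of $h$, $n$, the $n_a$, the $n'_a$, and $R$).
   Context: A permutation of the multiset $\{1^{m_1},\dots,h^{m_h}\}$ is a sequence $(\pi(1),\dots,\pi(m))$, $m=\sum m_a$, in which each $a$ occurs exactly $m_a$ times; uniformly distributed means all such sequences are equally likely. The relative order of a sequence $s_1,\dots,s_p$ is the ordered partition of $\{1,\dots,p\}$ obtained by putting $q$ and $r$ in the same block iff $s_q=s_r$, with blocks ordered by increasing common value of $s_q$. *)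

From mathcomp Require Import all_boot all_order all_algebra.
Set Implicit Arguments. Unset Strict Implicit. Unset Printing Implicit Defensive.
Import Order.TTheory GRing.Theory Num.Theory.

(* Positions are 0-based: position q : 'I_p stands for q+1 in {1,...,p};
   letters a : 'I_h stand for a+1 in {1,...,h}. *)

(* Relative order of the first p entries of a sequence s (of letters, as
   nats): the ordered partition of the positions {0,...,p-1}, q and r in the
   same block iff s_q = s_r, blocks ordered by increasing common value. *)
Definition relorder (p : nat) (s : seq nat) : seq {set 'I_p} :=
  [seq [set q : 'I_p | nth 0 s q == v] | v <- sort leq (undup (take p s))].

(* R is an ordered partition of {0,...,p-1}: nonempty blocks, pairwise
   disjoint (total size p), covering everything. *)
Definition ordered_partition (p : nat) (R : seq {set 'I_p}) : bool :=
  [&& set0 \notin R,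
      \sum_(B <- R) #|B| == p &
      \bigcup_(B <- R) B == [set: 'I_p]].

Definition mperms (h : nat) (m : 'I_h -> nat) :
  {set (\sum_(a < h) m a).-tuple 'I_h} :=
  [set t : (\sum_(a < h) m a).-tuple 'I_h | [forall a : 'I_h, count_mem a (tval t) == m a]].

Definition prob_relorder (h : nat) (m : 'I_h -> nat) (p : nat)
    (R : seq {set 'I_p}) : rat :=
  (#|[set t in mperms m | relorder p (map val t) == R]|%:R
     / #|mperms m|%:R)%R.

From mathcomp Require Import all_boot all_order all_algebra.
From mathcomp Require Import zify ring lra.
Import Order.TTheory GRing.Theory Num.Theory.
Set Implicit Arguments. Unset Strict Implicit. Unset Printing Implicit Defensive.

(* Let m be m' with one more copy of a letter a, and count the pairs (t, i)
   with t a permutation of m whose i-th entry is a.  There are m_a N of them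
   having the pattern R (N permutations of m have it), while for a fixed
   position i, deleting t_i is a bijection onto the permutations of m'; when
   i >= p this deletion does not touch the first p entries, so it preserves
   the pattern.  Hence m_a N and (n' + 1) N' differ by at most p M', where
   N' (resp. M') counts the permutations of m' with the pattern (resp. all of
   them), and |P - P'| <= p / (n' + 1).  Removing the at most five extra
   letters one at a time gives |P_1 - P_2| <= 25 / (n' + 1) <= 125 / n. *)

Section InsertDelete.
Variable T : eqType.
Implicit Types (s : seq T) (x y : T).

Definition insert_at i x s := take i s ++ x :: drop i s.
Definition delete_at i s := take i s ++ drop i.+1 s.

Lemma size_insert_at i x s : size (insert_at i x s) = (size s).+1.
Proof. rewrite /insert_at size_cat /= size_take size_drop; case: ltnP; lia. Qed.

Lemma size_delete_at i s : i < size s -> size (delete_at i s) = (size s).-1.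
Proof. move=> lt_i_s; rewrite /delete_at size_cat size_take size_drop lt_i_s; lia. Qed.

Lemma insert_atK i x s : i <= size s -> delete_at i (insert_at i x s) = s.
Proof.
move=> le_i_s; have size_take_i : size (take i s) = i by rewrite size_takel.
rewrite /delete_at /insert_at take_size_cat // drop_cat size_take_i ltnNge leqnSn.
by rewrite /= subSnn /= drop0 cat_take_drop.
Qed.

Lemma delete_atK x0 i s : i < size s -> insert_at i (nth x0 s i) (delete_at i s) = s.
Proof.
move=> lt_i_s; have size_take_i : size (take i s) = i by rewrite size_takel // ltnW.
rewrite /delete_at /insert_at take_size_cat // drop_cat size_take_i ltnn subnn drop0.
by rewrite -(drop_nth x0 lt_i_s) cat_take_drop.
Qed.

Lemma count_mem_insert_at i x y s :
  count_mem y (insert_at i x s) = count_mem y s + (x == y).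
Proof. rewrite /insert_at count_cat /= -[in RHS](cat_take_drop i s) count_cat; lia. Qed.

Lemma nth_insert_at x0 i x s : i <= size s -> nth x0 (insert_at i x s) i = x.
Proof.
move=> le_i_s; have size_take_i : size (take i s) = i by rewrite size_takel.
by rewrite /insert_at nth_cat size_take_i ltnn subnn.
Qed.

Lemma take_insert_at p i x s :
  p <= i -> i <= size s -> take p (insert_at i x s) = take p s.
Proof.
move=> le_p_i le_i_s; have size_take_i : size (take i s) = i by rewrite size_takel.
rewrite /insert_at take_cat size_take_i; case: ltnP => [lt_p_i|le_i_p].
  by rewrite take_takel.
have -> : p = i by lia.
by rewrite subnn take0 cats0.
Qed.

Lemma tinsert_proof n i x (t : n.-tuple T) : size (insert_at i x t) == n.+1.
Proof. by rewrite size_insert_at size_tuple. Qed.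
Definition tinsert n i x (t : n.-tuple T) : n.+1.-tuple T :=
  Tuple (tinsert_proof i x t).

Lemma tdelete_proof n (i : 'I_n.+1) (t : n.+1.-tuple T) : size (delete_at i t) == n.
Proof. by rewrite size_delete_at size_tuple. Qed.
Definition tdelete n (i : 'I_n.+1) (t : n.+1.-tuple T) : n.-tuple T :=
  Tuple (tdelete_proof i t).

Lemma tinsertK n (i : 'I_n.+1) x : cancel (@tinsert n i x) (tdelete i).
Proof. by move=> t; apply: val_inj; rewrite /= insert_atK // size_tuple -ltnS. Qed.

Lemma tdeleteK n (i : 'I_n.+1) x (t : n.+1.-tuple T) :
  tnth t i = x -> tinsert i x (tdelete i t) = t.
Proof.
move=> t_i; apply: val_inj; rewrite /= -{1}t_i (tnth_nth x) delete_atK //.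
by rewrite size_tuple.
Qed.

End InsertDelete.

Lemma sum_eventually_const_bound k p x M (c : 'I_k -> nat) :
  x <= M -> (forall i, c i <= M) -> (forall i : 'I_k, p <= i -> c i = x) ->
  \sum_i c i <= k * x + p * M /\ k * x <= \sum_i c i + p * M.
Proof.
move=> le_x_M le_c_M c_eq.
have sum_lt_p : \sum_(i < k) (i < p : nat) * M <= p * M.
  suff sum_lt_p_min : \sum_(i < k) (i < p : nat) = minn k p.
    by rewrite -big_distrl /= sum_lt_p_min leq_mul2r geq_minr orbT.
  elim: k {c c_eq le_c_M} => [|k IHk]; first by rewrite big_ord0 min0n.
  by rewrite big_ord_recr /= IHk; case: ltnP; lia.
have -> : k * x = \sum_(i < k) x by rewrite sum_nat_const card_ord.
split; apply: leq_trans (leq_add (leqnn _) sum_lt_p); rewrite -big_split;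
  apply: leq_sum => i _; case: ltnP => [_|le_p_i] /=.
- by rewrite mul1n (leq_trans (le_c_M i)) ?leq_addl.
- by rewrite c_eq // addn0.
- by rewrite mul1n (leq_trans le_x_M) ?leq_addl.
- by rewrite c_eq // addn0.
Qed.

Section Counts.
Variable h : nat.
Implicit Types (m : 'I_h -> nat) (s : seq 'I_h) (G : pred (seq 'I_h)).

Definition has_counts m s := [forall b, count_mem b s == m b].

Definition card_perms_with n m G :=
  #|[set t : n.-tuple 'I_h | has_counts m t && G t]|.

Lemma eq_has_counts m1 m2 : m1 =1 m2 -> has_counts m1 =1 has_counts m2.
Proof. by move=> eq_m s; apply: eq_forallb => b; rewrite eq_m. Qed.

Variables (m' : 'I_h -> nat) (a : 'I_h) (G : pred (seq 'I_h)).
Let m b := m' b + (b == a).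

Lemma has_counts_insert_at i s : has_counts m (insert_at i a s) = has_counts m' s.
Proof.
by apply: eq_forallb => b; rewrite count_mem_insert_at /m [a == b]eq_sym eqn_add2r.
Qed.

Lemma card_perms_with_letter_at n (i : 'I_n.+1) :
  #|[set t : n.+1.-tuple 'I_h | has_counts m t && (tnth t i == a) && G t]|
  = #|[set t : n.-tuple 'I_h | has_counts m' t && G (insert_at i a t)]|.
Proof.
rewrite -(card_imset _ (can_inj (tinsertK i a))); apply: eq_card => t.
rewrite inE; apply/idP/imsetP => [/andP[/andP[counts_t /eqP t_i] G_t]|[t' + ->]].
  exists (tdelete i t); last by rewrite tdeleteK.
  have ins_del : insert_at i a (tdelete i t) = t := congr1 val (tdeleteK t_i).
  by rewrite inE -(has_counts_insert_at i) ins_del counts_t.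
rewrite inE /= has_counts_insert_at => /andP[-> ->].
by rewrite (tnth_nth a) nth_insert_at ?eqxx // size_tuple -ltnS.
Qed.

Lemma sum_card_perms_with_letter_at n :
  \sum_(i < n.+1) #|[set t : n.+1.-tuple 'I_h | has_counts m t && (tnth t i == a) && G t]|
  = m a * card_perms_with n.+1 m G.
Proof.
under eq_bigr do rewrite -sum1_card big_mkcond /=.
rewrite exchange_big /= mulnC -sum_nat_const [RHS]big_mkcond /=.
apply: eq_bigr => t _; rewrite inE.
under eq_bigr do rewrite inE.
case counts_t: (has_counts m t); case: (G t) => /=; last 3 first.
- by rewrite big1 // => i; rewrite andbF.
- by rewrite big1.
- by rewrite big1.
under eq_bigr do rewrite andbT.
move/forallP/(_ a)/eqP: counts_t => <-.
by rewrite -sum1_count big_tuple [RHS]big_mkcond.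
Qed.

Variable p : nat.
Hypothesis G_take : forall s, G s = G (take p s).

Lemma card_perms_with_one_more n :
  let N := card_perms_with n.+1 m G in
  let N' := card_perms_with n m' G in
  let M' := card_perms_with n m' predT in
  m a * N <= n.+1 * N' + p * M' /\ n.+1 * N' <= m a * N + p * M'.
Proof.
rewrite /= -sum_card_perms_with_letter_at.
under eq_bigr do rewrite card_perms_with_letter_at.
apply: sum_eventually_const_bound => [|i|i le_p_i].
- by apply: subset_leq_card; apply/subsetP => t; rewrite !inE => /andP[->].
- by apply: subset_leq_card; apply/subsetP => t; rewrite !inE => /andP[->].
- apply: eq_card => t; rewrite !inE G_take [in RHS]G_take take_insert_at //.
  by rewrite size_tuple -ltnS.
Qed.

End Counts.

Local Open Scope ring_scope.

Lemma natr_dist_le (R : realDomainType) (x y z : nat) :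
  (x <= y + z)%N -> (y <= x + z)%N -> `|x%:R - y%:R| <= z%:R :> R.
Proof.
rewrite -!(ler_nat R) !natrD => le_x le_y.
by rewrite ler_norml; apply/andP; split; lra.
Qed.

Lemma dist_ratio_le (F : realFieldType) (k l N M N' M' e : F) :
  0 < k -> 0 < l -> 0 <= M' -> 0 <= e ->
  k * M = l * M' -> `|k * N - l * N'| <= e * M' ->
  `|N / M - N' / M'| <= e / l.
Proof.
move=> k_gt0 l_gt0 M'_ge0 e_ge0 eq_M le_N.
have [M'0|M'_neq0] := eqVneq M' 0.
  have M0 : M = 0 by apply/eqP; move/eqP: eq_M; rewrite M'0 mulr0 mulf_eq0 gt_eqF.
  by rewrite M0 M'0 !invr0 !mulr0 subrr normr0 divr_ge0 // ltW.
have M'_gt0 : 0 < M' by rewrite lt_def M'_neq0.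
have -> : M = l * M' / k by rewrite -eq_M [k * M]mulrC mulfK ?gt_eqF.
have -> : N / (l * M' / k) - N' / M' = (k * N - l * N') / (l * M').
  by field; rewrite M'_neq0 !gt_eqF.
rewrite normrM normfV (gtr0_norm (mulr_gt0 l_gt0 M'_gt0)) ler_pdivrMr ?mulr_gt0 //.
by rewrite mulrA divfK ?gt_eqF.
Qed.

Definition has_relorder {h} p (R : seq {set 'I_p}) (s : seq 'I_h) :=
  relorder p (map val s) == R.

Lemma has_relorder_take p (R : seq {set 'I_p}) h (s : seq 'I_h) :
  has_relorder R s = has_relorder R (take p s).
Proof.
rewrite /has_relorder /relorder map_take take_takel //; congr (_ == _).
by apply: eq_map => v; apply/setP => q; rewrite !inE nth_take.
Qed.

Lemma prob_relorderE h (m : 'I_h -> nat) p (R : seq {set 'I_p}) n :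
  (\sum_a m a)%N = n ->
  prob_relorder m R
  = (card_perms_with n m (has_relorder R))%:R / (card_perms_with n m predT)%:R.
Proof.
move=> <-; congr (_%:R / _%:R); apply: eq_card => t; rewrite !inE ?andbT //.
Qed.

Lemma eq_prob_relorder h (m1 m2 : 'I_h -> nat) p (R : seq {set 'I_p}) :
  m1 =1 m2 -> prob_relorder m1 R = prob_relorder m2 R.
Proof.
move=> eq_m; have eq_sum : (\sum_a m2 a = \sum_a m1 a)%N by apply/esym/eq_bigr.
rewrite (prob_relorderE R (erefl _)) (prob_relorderE R eq_sum).
by congr (_%:R / _%:R); apply: eq_card => t; rewrite !inE (eq_has_counts eq_m).
Qed.

Lemma sum_indicator1 h (a : 'I_h) : (\sum_b (b == a : nat))%N = 1%N.
Proof. by rewrite (bigD1 a) //= eqxx big1 // => b /negbTE ->. Qed.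

Lemma prob_relorder_one_more h (m' : 'I_h -> nat) a p (R : seq {set 'I_p}) :
  `|prob_relorder (fun b => m' b + (b == a))%N R - prob_relorder m' R|
    <= p%:R / (\sum_b m' b).+1%:R.
Proof.
set n := (\sum_b m' b)%N.
have sum_m : (\sum_b (m' b + (b == a)) = n.+1)%N.
  by rewrite big_split /= sum_indicator1 addn1.
rewrite (prob_relorderE R sum_m) (prob_relorderE R (erefl n)).
have [pat_le pat_ge] := card_perms_with_one_more m' a (@has_relorder_take p R h) n.
have [all_le all_ge] := @card_perms_with_one_more h m' a predT 0 (fun _ => erefl) n.
rewrite /= !mul0n !addn0 in pat_le pat_ge all_le all_ge.
apply: (@dist_ratio_le _ (m' a + (a == a))%:R); rewrite ?ltr0n ?ler0n //.
- by rewrite eqxx addn1.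
- by rewrite -!natrM; congr _%:R; apply/eqP; rewrite eqn_leq all_le all_ge.
- by rewrite -!natrM natr_dist_le.
Qed.

Lemma prob_relorder_dist h p (R : seq {set 'I_p}) d (m m' : 'I_h -> nat) :
  (forall a, m' a <= m a)%N -> (\sum_a (m a - m' a))%N = d ->
  `|prob_relorder m R - prob_relorder m' R| <= d%:R * p%:R / (\sum_a m' a).+1%:R.
Proof.
elim: d m => [|d IHd] m le_m'_m sum_d.
  have eq_m b : m b = m' b.
    move/eqP: sum_d; rewrite sum_nat_eq0 => /forallP/(_ b)/eqP.
    by have := le_m'_m b; lia.
  by rewrite (eq_prob_relorder R eq_m) subrr normr0 !mul0r.
have : (\sum_a (m a - m' a) != 0)%N by rewrite sum_d.
rewrite sum_nat_eq0 negb_forall => /existsP[a /= diff_a_neq0].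
pose m1 b := (m b - (b == a))%N.
have eq_m b : m b = (m1 b + (b == a))%N.
  by rewrite /m1; case: eqP => [->|_]; lia.
have le_m'_m1 b : (m' b <= m1 b)%N.
  by rewrite /m1; case: eqP => [->|_]; have := le_m'_m b; lia.
have sum_d1 : (\sum_b (m1 b - m' b))%N = d.
  apply/eqP; rewrite -eqSS -sum_d -addn1 -(sum_indicator1 a) -big_split /=.
  by apply/eqP/eq_bigr => b _; rewrite /m1; case: eqP => [->|_]; have := le_m'_m b; lia.
have le_sum : (\sum_b m' b <= \sum_b m1 b)%N by apply: leq_sum.
apply: le_trans (ler_distD (prob_relorder m1 R) _ _) _.
rewrite (eq_prob_relorder R eq_m) -addn1 natrD !mulrDl mul1r [leRHS]addrC.
apply: lerD; last exact: IHd m1 le_m'_m1 sum_d1.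
apply: le_trans (prob_relorder_one_more m1 a R) _.
apply: ler_wpM2l; first exact: ler0n.
by rewrite lef_pV2 ?posrE ?ltr0n // ler_nat ltnS.
Qed.

Theorem lemma2p9 :
  exists C : rat,
    forall (p : nat) (R : seq {set 'I_p}) (h : nat) (m m' : 'I_h -> nat),
      (p <= 5)%N ->
      @ordered_partition p R ->
      (forall a, m' a <= m a)%N ->
      (\sum_(a < h) (m a - m' a) <= 5)%N ->
      (p <= \sum_(a < h) m' a)%N ->
      `|@prob_relorder h m p R - @prob_relorder h m' p R|
        <= C / (\sum_(a < h) m a)%:R.
Proof.
exists 125%:R => p R h m m' le_p5 _ le_m'_m le_d5 _.
apply: le_trans (prob_relorder_dist R le_m'_m (erefl _)) _.
set d := (\sum_a (m a - m' a))%N in le_d5 *; set n' := (\sum_a m' a)%N.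
have -> : (\sum_a m a = n' + d)%N.
  by rewrite -big_split /=; apply: eq_bigr => a _; have := le_m'_m a; lia.
have [->|d_gt0] := posnP d; first by rewrite mulr0n !mul0r divr_ge0 ?ler0n.
have n'1_gt0 : 0 < n'.+1%:R :> rat by rewrite ltr0n.
have n_gt0 : 0 < (n' + d)%:R :> rat by rewrite ltr0n addn_gt0 d_gt0 orbT.
rewrite (ler_pdivrMr _ _ n'1_gt0) mulrAC (ler_pdivlMr _ _ n_gt0) -!natrM ler_nat.
apply: leq_trans (leq_mul (leq_mul le_d5 le_p5) (leq_add (leqnn n') le_d5)) _.
lia.
Qed.
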